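(* Let $n\in\mathbb{N}_0$. The range of the operator $I+RM+MR$ on $\mathbb{P}^\perp_{n,n-1}(\widehat T)$ is exactly $\{p\in\mathbb{P}^\perp_{n,n-1}(\widehat T): RMp=p\}$.
   Context: $\widehat T$ is the triangle with vertices $(0,0),(1,0),(0,1)$; $\mathbb{P}^\perp_{0,-1}(\widehat T)=\mathbb{P}_0$ and for $n\ge1$, $\mathbb{P}^\perp_{n,n-1}(\widehat T)$ is the space of polynomials of total degree $\le n$ that are $L^2(\widehat T)$-orthogonal to all polynomials of degree $\le n-1$. The linear maps $M,R$ are $Mp(x_1,x_2):=p(1-x_1-x_2,x_2)$ and $Rp(x_1,x_2):=p(x_2,x_1)$; both are automorphisms of $\mathbb{P}^\perp_{n,n-1}(\widehat T)$, and $RM$, $MR$ denote operator compositions. *)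

From HB Require Import structures.
From mathcomp Require Import all_boot all_order all_algebra.
From mathcomp Require Import all_classical all_reals all_analysis.
Set Implicit Arguments. Unset Strict Implicit. Unset Printing Implicit Defensive.
Import Order.TTheory GRing.Theory Num.Theory.
Local Open Scope classical_set_scope.
Local Open Scope ring_scope.

Section Defs.
Variable R : realType.

Definition Tref : set (R * R) :=
  [set x | 0 <= x.1 /\ 0 <= x.2 /\ x.1 + x.2 <= 1].

Definition poly_le (n : nat) (p : R * R -> R) : Prop :=
  exists c : nat -> nat -> R, forall x : R * R,
    p x = \sum_(i < n.+1) \sum_(j < n.+1 | (i + j <= n)%N) c i j * x.1 ^+ i * x.2 ^+ j.

Definition L2T (p q : R * R -> R) : \bar R :=
  (\int[(@lebesgue_measure R \x @lebesgue_measure R)%E]_(x in Tref) (p x * q x)%:E)%E.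

(* P^perp_{n,n-1}(Tref); for n = 0 this is P_0 *)
Definition Pperp (n : nat) (p : R * R -> R) : Prop :=
  poly_le n p /\
  forall q, (0 < n)%N -> poly_le n.-1 q -> L2T p q = 0%E.

Definition Mop (p : R * R -> R) : R * R -> R := fun x => p (1 - x.1 - x.2, x.2).
Definition Rop (p : R * R -> R) : R * R -> R := fun x => p (x.2, x.1).
End Defs.

From HB Require Import structures.
From mathcomp Require Import all_boot all_order all_algebra.
From mathcomp Require Import all_classical all_reals all_analysis.
From mathcomp Require Import measurable_realfun ring lra zify.
Set Implicit Arguments. Unset Strict Implicit. Unset Printing Implicit Defensive.
Import Order.TTheory GRing.Theory Num.Theory.
Local Open Scope classical_set_scope.
Local Open Scope ring_scope.

(* M and R are affine involutions of the reference triangle preserving Lebesgue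
   measure, so composing with them preserves the total degree and is self-adjoint
   for the L^2 product on the triangle; hence both preserve P^perp_{n,n-1}.  As
   (RM)^2 = MR, we get RM (I + RM + MR) = I + RM + MR, so the range lies in the
   fixed space of RM, on which I + RM + MR is multiplication by 3. *)

Section integral_preserving.
Local Open Scope ereal_scope.
Context d (T : measurableType d) (R : realType) (mu : {measure set T -> \bar R}).

Definition integral_preserving (phi : T -> T) :=
  forall g : T -> \bar R, measurable_fun setT g -> (forall x, 0 <= g x) ->
    \int[mu]_x g (phi x) = \int[mu]_x g x.

Variables (phi : T -> T) (D : set T).
Hypotheses (phiP : integral_preserving phi) (mD : measurable D)
  (phiD : phi @^-1` D = D).

Lemma ge0_integral_preserving_on (g : T -> \bar R) :
  measurable_fun setT g -> (forall x, 0 <= g x) ->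
  \int[mu]_(x in D) g (phi x) = \int[mu]_(x in D) g x.
Proof.
move=> mg g0.
have Dphi x : (phi x \in D) = (x \in D).
  by rewrite -[in RHS]phiD; apply/idP/idP => /set_mem ?; apply/mem_set.
rewrite integral_mkcond [RHS]integral_mkcond -[RHS]phiP => [||x]; last exact: erestrict_ge0.
- by apply: eq_integral => x _; rewrite /patch Dphi.
- exact/(measurable_restrictT _ mD)/measurable_funTS.
Qed.

Lemma integral_preserving_on (g : T -> \bar R) : measurable_fun setT g ->
  \int[mu]_(x in D) g (phi x) = \int[mu]_(x in D) g x.
Proof.
move=> mg; rewrite integralE [RHS]integralE.
rewrite (funepos_comp g phi) (funeneg_comp g phi).
have [mgp mgn] := (measurable_funepos mg, measurable_funeneg mg).
by rewrite !ge0_integral_preserving_on // => x; rewrite ?funepos_ge0 ?funeneg_ge0.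
Qed.

End integral_preserving.

Lemma integral_preserving_swap d (T : measurableType d) (R : realType)
    (mu : {sigma_finite_measure set T -> \bar R}) :
  integral_preserving (mu \x mu)%E (fun x : T * T => (x.2, x.1)).
Proof.
move=> g mg g0; have mgs := measurableT_comp mg (@measurable_swap _ _ T T).
by rewrite (fubini_tonelli1 _ mgs (fun=> g0 _)) (fubini_tonelli2 _ mg g0).
Qed.

Section reflection.
Context (R : realType) (c : R).
Local Notation mu := (@lebesgue_measure R).

Let measurable_reflect :
  measurable_fun [set: measurableTypeR R] ((fun x => c - x) : _ -> measurableTypeR R).
Proof. exact: measurable_funB. Qed.

Lemma lebesgue_measure_reflect (A : set R) : measurable A ->
  pushforward mu ((fun x => c - x) : _ -> measurableTypeR R) A = mu A.
Proof.
(* [//] finds [measurable_reflect], which makes the pushforward a measure. *)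
move=> mA; apply/esym/lebesgue_measure_unique => //= _ [[a b]] _ <-.
rewrite /pushforward.
have -> : (fun x : R => c - x) @^-1` `]a, b] = `[c - b, c - a[%classic.
  by apply/seteqP; split => x /=; rewrite !in_itv /= => /andP[? ?]; apply/andP; split; lra.
rewrite !lebesgue_measure_itv /= !lte_fin ltrD2l ltrN2.
by case: ltP => // _; rewrite -!EFinD; congr (_%:E); ring.
Qed.

Lemma ge0_integral_reflect (f : R -> \bar R) :
  measurable_fun setT f -> (forall x, 0 <= f x)%E ->
  (\int[mu]_x f (c - x)%R = \int[mu]_x f x)%E.
Proof.
move=> mf f0.
transitivity (\int[mu]_(x in (fun x => c - x)%R @^-1` setT) (f \o (fun x => c - x)%R) x)%E.
  by rewrite preimage_setT.
rewrite -(ge0_integral_pushforward measurable_reflect) //.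
by apply: eq_measure_integral => A mA _; exact: lebesgue_measure_reflect.
Qed.

End reflection.

Section triangle.
Context (R : realType).
Local Notation mu := (@lebesgue_measure R).
Local Notation P := (mu \x mu)%E.

Definition mirror (x : R * R) : R * R := (1 - x.1 - x.2, x.2).

Lemma measurable_mirror : measurable_fun setT mirror.
Proof.
by apply: measurable_fun_pair => //; apply: measurable_funB => //; apply: measurable_funB.
Qed.

Lemma integral_preserving_mirror : integral_preserving P mirror.
Proof.
move=> g mg g0; have mgm := measurableT_comp mg measurable_mirror.
rewrite (fubini_tonelli2 (m1 := mu) (m2 := mu) _ mgm (fun=> g0 _)) (fubini_tonelli2 _ mg g0).
apply: eq_integral => y _; rewrite /fubini_G.
rewrite -(ge0_integral_reflect (1 - y) (measurable_fun_pair1 y mg) (fun=> g0 _)).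
by apply: eq_integral => x _; rewrite /mirror /=; congr (g (_, _)); ring.
Qed.

Lemma measurable_Tref : measurable (@Tref R).
Proof.
have -> : @Tref R = fst @^-1` `[0, +oo[ `&`
    (snd @^-1` `[0, +oo[ `&` (fun x : R * R => x.1 + x.2) @^-1` `]-oo, 1]).
  by apply/seteqP; split => x /=; rewrite /Tref /= !in_itv /= ?andbT.
apply: measurableI; first by rewrite -[X in measurable X]setTI; apply: measurable_fst.
apply: measurableI; first by rewrite -[X in measurable X]setTI; apply: measurable_snd.
by rewrite -[X in measurable X]setTI; apply: measurable_funD.
Qed.

Lemma mirror_Tref : mirror @^-1` @Tref R = @Tref R.
Proof. by apply/seteqP; split => -[a b]; rewrite /Tref /= => -[? [? ?]]; lra. Qed.

Lemma swap_Tref : (fun x : R * R => (x.2, x.1)) @^-1` @Tref R = @Tref R.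
Proof. by apply/seteqP; split => -[a b]; rewrite /Tref /= => -[? [? ?]]; lra. Qed.

Lemma L2T_involution (phi : R * R -> R * R) (p q : R * R -> R) :
  integral_preserving P phi -> involutive phi -> phi @^-1` @Tref R = @Tref R ->
  measurable_fun setT phi -> measurable_fun setT p -> measurable_fun setT q ->
  L2T (p \o phi) q = L2T p (q \o phi).
Proof.
move=> phiP phiK phiT mphi mp mq; rewrite /L2T.
rewrite -(integral_preserving_on phiP measurable_Tref phiT); last first.
  by apply/measurable_EFinP/measurable_funM => //; exact: measurableT_comp.
by apply: eq_integral => x _; rewrite /= phiK.
Qed.

Lemma L2T_Mop (p q : R * R -> R) : measurable_fun setT p -> measurable_fun setT q ->
  L2T (Mop p) q = L2T p (Mop q).
Proof.
apply: L2T_involution; [exact: integral_preserving_mirror | | exact: mirror_Tref |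
  exact: measurable_mirror].
by move=> [a b]; rewrite /mirror /=; congr (_, _); ring.
Qed.

Lemma L2T_Rop (p q : R * R -> R) : measurable_fun setT p -> measurable_fun setT q ->
  L2T (Rop p) q = L2T p (Rop q).
Proof.
apply: L2T_involution; [exact: integral_preserving_swap | by case | exact: swap_Tref |
  exact: measurable_swap].
Qed.

End triangle.

Section polynomials.
Context (R : realType).
Implicit Types (p q : R * R -> R) (k : R).

Lemma poly_leP n p : poly_le n p <->
  exists c : nat -> nat -> R, (forall i j, (n < i + j)%N -> c i j = 0) /\
    forall x, p x = \sum_(i < n.+1) \sum_(j < n.+1) c i j * x.1 ^+ i * x.2 ^+ j.
Proof.
split=> [[c pE] | [c [c0 pE]]].
- exists (fun i j => if (i + j <= n)%N then c i j else 0); split=> [i j lt_n|x].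
    by rewrite leqNgt lt_n.
  rewrite pE; apply: eq_bigr => i _; rewrite [LHS]big_mkcond; apply: eq_bigr => j _.
  by case: ifP; rewrite ?mul0r.
- exists c => x; rewrite pE; apply: eq_bigr => i _; rewrite [RHS]big_mkcond.
  by apply: eq_bigr => j _; case: leqP => // /c0 ->; rewrite !mul0r.
Qed.

Lemma poly_le_ext n p q : p =1 q -> poly_le n p -> poly_le n q.
Proof. by move=> pq [c pE]; exists c => x; rewrite -pq. Qed.

Lemma poly_le_const k : poly_le 0 (fun=> k).
Proof.
apply/poly_leP; exists (fun i j => if (i + j == 0)%N then k else 0).
split=> [i j|x]; first by rewrite lt0n => /negbTE ->.
by rewrite !big_ord1 /= !expr0 !mulr1.
Qed.

Lemma poly_le_succ n p : poly_le n p -> poly_le n.+1 p.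
Proof.
move=> /poly_leP[c [c0 pE]]; apply/poly_leP; exists c; split=> [i j lt_n|x].
  by apply: c0; apply: ltnW.
rewrite pE [RHS]big_ord_recr /= [X in _ = _ + X]big1 ?addr0 => [|j _]; last first.
  by rewrite c0 ?mul0r //; lia.
by apply: eq_bigr => i _; rewrite [RHS]big_ord_recr /= c0 ?mul0r ?addr0 //; lia.
Qed.

Lemma poly_le_widen m n p : (m <= n)%N -> poly_le m p -> poly_le n p.
Proof.
move=> /subnK <-; elim: (n - m)%N => [|k IH] // pm.
by rewrite addSn; apply/poly_le_succ/IH.
Qed.

Lemma poly_le_add n p q : poly_le n p -> poly_le n q -> poly_le n (fun x => p x + q x).
Proof.
move=> /poly_leP[c [c0 pE]] /poly_leP[c' [c'0 qE]]; apply/poly_leP.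
exists (fun i j => c i j + c' i j); split=> [i j lt_n|x].
  by rewrite c0 // c'0 // addr0.
rewrite pE qE -big_split; apply: eq_bigr => i _.
by rewrite -big_split; apply: eq_bigr => j _; rewrite /= !mulrDl.
Qed.

Lemma poly_le_scale n k p : poly_le n p -> poly_le n (fun x => k * p x).
Proof.
move=> [c pE]; exists (fun i j => k * c i j) => x.
rewrite pE mulr_sumr; apply: eq_bigr => i _.
by rewrite mulr_sumr; apply: eq_bigr => j _; rewrite !mulrA.
Qed.

Lemma poly_le_sum n m (F : nat -> R * R -> R) : (forall i, poly_le n (F i)) ->
  poly_le n (fun x => \sum_(i < m) F i x).
Proof.
move=> Fn; elim: m => [|m IH].
  by apply: (poly_le_ext _ (poly_le_widen (leq0n n) (poly_le_const 0))) => x; rewrite big_ord0.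
by apply: (poly_le_ext _ (poly_le_add IH (Fn m))) => x; rewrite big_ord_recr.
Qed.

Lemma poly_le_mulX1 n p : poly_le n p -> poly_le n.+1 (fun x => x.1 * p x).
Proof.
move=> /poly_leP[c [c0 pE]]; apply/poly_leP.
exists (fun i j => if i is i'.+1 then c i' j else 0); split=> [[|i] j //|x].
  by rewrite addSn ltnS; apply: c0.
rewrite pE [RHS]big_ord_recl /= [X in _ = X + _]big1 ?add0r => [|j _]; last by rewrite !mul0r.
rewrite mulr_sumr; apply: eq_bigr => i _; rewrite add0n /bump leq0n add1n.
rewrite [RHS]big_ord_recr /= c0 ?mul0r ?addr0; last by lia.
by rewrite mulr_sumr; apply: eq_bigr => j _; rewrite exprS; ring.
Qed.

Lemma poly_le_mulX2 n p : poly_le n p -> poly_le n.+1 (fun x => x.2 * p x).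
Proof.
move=> /poly_leP[c [c0 pE]]; apply/poly_leP.
exists (fun i j => if j is j'.+1 then c i j' else 0); split=> [i [|j] //|x].
  by rewrite addnS ltnS; apply: c0.
rewrite pE [RHS]big_ord_recr /= [X in _ = _ + X]big1 ?addr0 => [|[[|j] ?] _] /=.
- rewrite mulr_sumr; apply: eq_bigr => i _.
  rewrite [RHS]big_ord_recl /= !mul0r add0r mulr_sumr; apply: eq_bigr => j _.
  by rewrite ?add0n /bump leq0n ?add1n /= exprS; ring.
- by rewrite !mul0r.
- by rewrite c0 ?mul0r //; lia.
Qed.

Definition affine_fun (l : R * R -> R) :=
  exists a b c : R, forall x, l x = a + b * x.1 + c * x.2.

Lemma poly_le_mul_affine n l p : affine_fun l -> poly_le n p ->
  poly_le n.+1 (fun x => l x * p x).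
Proof.
move=> [a [b [c lE]]] pn.
apply: (poly_le_ext _ (poly_le_add (poly_le_add (poly_le_succ (poly_le_scale a pn))
  (poly_le_scale b (poly_le_mulX1 pn))) (poly_le_scale c (poly_le_mulX2 pn)))).
by move=> x; rewrite lE; ring.
Qed.

Lemma poly_le_affine_monomial l1 l2 i j : affine_fun l1 -> affine_fun l2 ->
  poly_le (i + j) (fun x => l1 x ^+ i * l2 x ^+ j).
Proof.
move=> l1A l2A; elim: i => [|i IH].
  elim: j => [|j IH].
    by apply: (poly_le_ext _ (poly_le_const 1)) => x; rewrite !expr0 mulr1.
  apply: (poly_le_ext _ (poly_le_mul_affine l2A IH)) => x.
  by rewrite !expr0 !mul1r exprS.
apply: (poly_le_ext _ (poly_le_mul_affine l1A IH)) => x.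
by rewrite exprS mulrA.
Qed.

Lemma poly_le_comp_affine n l1 l2 p : affine_fun l1 -> affine_fun l2 ->
  poly_le n p -> poly_le n (fun x => p (l1 x, l2 x)).
Proof.
move=> l1A l2A /poly_leP[c [c0 pE]].
pose F i j x := c i j * (l1 x ^+ i * l2 x ^+ j).
apply: (@poly_le_ext _ (fun x => \sum_(i < n.+1) \sum_(j < n.+1) F i j x)) => [x|].
  by rewrite pE; apply: eq_bigr => i _; apply: eq_bigr => j _; rewrite /F mulrA.
apply: (@poly_le_sum n n.+1 (fun i x => \sum_(j < n.+1) F i j x)) => i.
apply: (@poly_le_sum n n.+1 (F i)) => j.
have [le_n|lt_n] := leqP (i + j) n.
  exact/poly_le_scale/(poly_le_widen le_n)/poly_le_affine_monomial.
apply: (poly_le_ext _ (poly_le_widen (leq0n n) (poly_le_const 0))) => x.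
by rewrite /F c0 ?mul0r.
Qed.

Lemma poly_le_Mop n p : poly_le n p -> poly_le n (Mop p).
Proof.
apply: poly_le_comp_affine; first by exists 1, (-1), (-1) => x; ring.
by exists 0, 0, 1 => x; ring.
Qed.

Lemma poly_le_Rop n p : poly_le n p -> poly_le n (Rop p).
Proof.
by apply: poly_le_comp_affine; [exists 0, 0, 1 | exists 0, 1, 0] => x; ring.
Qed.

End polynomials.

Section L2_triangle.
Context (R : realType).
Local Notation mu := (@lebesgue_measure R).
Local Notation P := (mu \x mu)%E.
Implicit Types (p q r : R * R -> R) (k : R).

Lemma measurable_poly n p : poly_le n p -> measurable_fun setT p.
Proof.
move=> /poly_leP[c [_ pE]].
rewrite (_ : p = fun x => \sum_(i < n.+1) \sum_(j < n.+1) c i j * x.1 ^+ i * x.2 ^+ j).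
  apply: measurable_sum => i; apply: measurable_sum => j.
  by apply: measurable_funM; [apply: measurable_funM|]; [|apply: measurable_funX..].
exact/funext.
Qed.

Lemma poly_bounded_Tref n p : poly_le n p ->
  exists C, forall x, @Tref R x -> `|p x| <= C.
Proof.
move=> /poly_leP[c [_ pE]]; exists (\sum_(i < n.+1) \sum_(j < n.+1) `|c i j|).
move=> x [x1_ge0 [x2_ge0 x12_le1]]; rewrite pE.
apply: (le_trans (ler_norm_sum _ _ _)); apply: ler_sum => i _.
apply: (le_trans (ler_norm_sum _ _ _)); apply: ler_sum => j _.
rewrite !normrM !normrX -mulrA; apply: ler_piMr => //.
by apply: mulr_ile1; rewrite ?exprn_ge0 // exprn_ile1 // ger0_norm //; lra.
Qed.

Lemma Tref_finite : (P (@Tref R) < +oo)%E.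
Proof.
have unit_itv : mu `[0, 1]%classic = 1%:E.
  by rewrite lebesgue_measure_itv /= lte_fin ltr01 -EFinD subr0.
apply: (@le_lt_trans _ _ (P (`[0, 1]%classic `*` `[0, 1]%classic))).
  apply: le_measure; rewrite ?inE; [exact: measurable_Tref | exact: measurableX |].
  by move=> x [? [? ?]]; split; rewrite /= in_itv /=; apply/andP; split; lra.
rewrite product_measure1E //.
change (mu `[0%R, 1%R]%classic * mu `[0%R, 1%R]%classic < +oo)%E.
by rewrite unit_itv mule1 ltry.
Qed.

Lemma integrable_poly_mul m n p q : poly_le m p -> poly_le n q ->
  P.-integrable (@Tref R) (EFin \o (fun x => p x * q x)).
Proof.
move=> pm qn; apply: measurable_bounded_integrable.
- exact: measurable_Tref.
- exact: Tref_finite.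
- apply/measurable_funTS/measurable_funM.
    exact: measurable_poly pm.
  exact: measurable_poly qn.
have [[Cp pC] [Cq qC]] := (poly_bounded_Tref pm, poly_bounded_Tref qn).
exists (Cp * Cq); split; first exact: num_real.
move=> C /ltW CpqC x Tx; apply: le_trans CpqC; rewrite normrM.
by apply: ler_pM => //; [exact: pC | exact: qC].
Qed.

Lemma L2T_addl m n p1 p2 q : poly_le m p1 -> poly_le m p2 -> poly_le n q ->
  L2T (fun x => p1 x + p2 x) q = (L2T p1 q + L2T p2 q)%E.
Proof.
move=> p1m p2m qn.
have [i1 i2] := (integrable_poly_mul p1m qn, integrable_poly_mul p2m qn).
rewrite /L2T -(integralD _ i1 i2); last exact: measurable_Tref.
by apply: eq_integral => x _; rewrite /= -EFinD mulrDl.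
Qed.

Lemma L2T_scalel m n k p q : poly_le m p -> poly_le n q ->
  L2T (fun x => k * p x) q = (k%:E * L2T p q)%E.
Proof.
move=> pm qn; rewrite /L2T -(integralZl _ (integrable_poly_mul pm qn)).
  by apply: eq_integral => x _; rewrite /= -EFinM mulrA.
exact: measurable_Tref.
Qed.

Lemma Pperp_add n p q : Pperp n p -> Pperp n q -> Pperp n (fun x => p x + q x).
Proof.
move=> [pn pO] [qn qO]; split=> [|r n_gt0 rn]; first exact: poly_le_add.
by rewrite (L2T_addl pn qn rn) pO // qO // adde0.
Qed.

Lemma Pperp_scale n k p : Pperp n p -> Pperp n (fun x => k * p x).
Proof.
move=> [pn pO]; split=> [|r n_gt0 rn]; first exact: poly_le_scale.
by rewrite (L2T_scalel k pn rn) pO // mule0.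
Qed.

Lemma Pperp_Mop n p : Pperp n p -> Pperp n (Mop p).
Proof.
move=> [pn pO]; split=> [|r n_gt0 rn]; first exact: poly_le_Mop.
rewrite (L2T_Mop (measurable_poly pn) (measurable_poly rn)).
exact/pO/poly_le_Mop.
Qed.

Lemma Pperp_Rop n p : Pperp n p -> Pperp n (Rop p).
Proof.
move=> [pn pO]; split=> [|r n_gt0 rn]; first exact: poly_le_Rop.
rewrite (L2T_Rop (measurable_poly pn) (measurable_poly rn)).
exact/pO/poly_le_Rop.
Qed.

End L2_triangle.

Section operators.
Context (R : realType).
Implicit Types p : R * R -> R.

Lemma MopK p : Mop (Mop p) = p.
Proof. by apply/funext => -[a b]; rewrite /Mop /=; congr (p (_, _)); ring. Qed.

Lemma RopK p : Rop (Rop p) = p.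
Proof. by apply/funext => -[]. Qed.

Lemma RopMop_square p : Rop (Mop (Rop (Mop p))) = Mop (Rop p).
Proof. by apply/funext => -[a b]; rewrite /Mop /Rop /=; congr (p (_, _)); ring. Qed.

End operators.

Theorem proposition16 (R : realType) (n : nat) :
  [set p | exists2 q, Pperp n q &
             p = (fun x => q x + Rop (Mop q) x + Mop (Rop q) x)]
  = [set p : R * R -> R | Pperp n p /\ Rop (Mop p) = p].
Proof.
apply/seteqP; split=> p /=.
- case=> q qP ->; split.
    exact: Pperp_add (Pperp_add qP (Pperp_Rop (Pperp_Mop qP))) (Pperp_Mop (Pperp_Rop qP)).
  rewrite -[LHS]/(fun x => Rop (Mop q) x + Rop (Mop (Rop (Mop q))) x
                           + Rop (Mop (Mop (Rop q))) x).
  by rewrite RopMop_square MopK RopK; apply/funext => x; rewrite addrC addrA.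
- case=> pP RMp; have MRp : Mop (Rop p) = p by rewrite -[in LHS]RMp RopK MopK.
  exists (fun x => 3^-1 * p x); first exact: Pperp_scale.
  rewrite -[X in _ = X]/(fun x => 3^-1 * p x + 3^-1 * Rop (Mop p) x
                                  + 3^-1 * Mop (Rop p) x) RMp MRp.
  by apply/funext => x; lra.
Qed.
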